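(* For an integer $n>1$ define, for every integer $1\le r\le n-1$, $$E^{P}_{n}(r)=\frac{r}{n}\sum_{k=r+1}^{n}\frac{1+\frac{k}{n}}{k-1},$$ and let $\mathcal{M}(n)$ be a value of $r$ at which $E^P_n$ attains its maximum. Let $\mu=\frac12 W(2)=0.42630\dots$. Then (i) $\lim_{n\to\infty}\mathcal{M}(n)/n=\mu$; (ii) $\lim_{n\to\infty}E^P_n(\mathcal{M}(n))=\lim_{n\to\infty}E^P_n(\lfloor\mu n\rfloor)=\mu(1+\mu)=0.608037\dots$.
   Context: $W$ denotes the principal (main) branch of the Lambert $W$ function, i.e. the inverse of $z\mapsto ze^z$ on $[-1,\infty)$, so that $z=W(ze^z)$ for $z\ge -1$. *)

From Stdlib Require Import Reals Lra Lia ClassicalEpsilon.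
From Coquelicot Require Import Coquelicot.
Open Scope R_scope.

(* Principal branch of Lambert W: the unique w >= -1 with w e^w = x
   (chosen by Hilbert's epsilon; for x >= -1/e this is W(x)). *)
Definition LambertW (x : R) : R :=
  epsilon (inhabits 0) (fun w => -1 <= w /\ w * exp w = x).

Definition EP (n r : nat) : R :=
  (INR r / INR n) *
  sum_n_m (fun k : nat => (1 + INR k / INR n) / (INR k - 1)) (S r) n.

Definition mu : R := LambertW 2 / 2.

Definition floorN (x : R) : nat := Z.to_nat (Int_part x).

(* Writing x = r/n, the sum defining E^P_n(r) is (1 + 1/n)(ln(n/r) + O(1/r)) + (1 - x),
   so E^P_n(r) = F(x) + O(1/n) uniformly in r, where F(x) = x(1 - x - ln x).
   Since W(2) e^W(2) = 2, the point mu = W(2)/2 satisfies ln mu = -2 mu, which is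
   exactly F'(mu) = 0, and F(mu) = mu(1 + mu). From ln t <= t - 1 one gets the
   two-sided quadratic estimate
     F(mu) - (1 + 1/mu)(x - mu)^2 <= F(x) <= F(mu) - (x - mu)^2.
   Hence r = floor(mu n) gives E^P_n(r) = mu(1 + mu) + O(1/n); a maximiser M(n) does
   at least as well, which forces (M(n)/n - mu)^2 = O(1/n). *)

From Stdlib Require Import Reals Lra Lia ZArith ClassicalEpsilon.
From Coquelicot Require Import Coquelicot.
Open Scope R_scope.

Lemma ln_le_sub_1 (y : R) : 0 < y -> ln y <= y - 1.
Proof.
  intros Hy. pose proof (exp_ineq1_le (ln y)) as H.
  rewrite exp_ln in H by exact Hy. lra.
Qed.

Lemma ln_sub_ln_le (x y : R) : 0 < x -> 0 < y -> ln y - ln x <= (y - x) / x.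
Proof.
  intros Hx Hy. rewrite <- ln_div by assumption.
  replace ((y - x) / x) with (y / x - 1) by (field; lra).
  apply ln_le_sub_1, Rdiv_lt_0_compat; assumption.
Qed.

Lemma inv_INR_bounds (n : nat) : (1 <= n)%nat -> 0 < / INR n <= 1.
Proof.
  intros Hn. assert (HN : 1 <= INR n) by (apply (le_INR 1); exact Hn).
  split; [apply Rinv_0_lt_compat; lra|].
  rewrite <- Rinv_1. apply Rinv_le_contravar; lra.
Qed.

Lemma is_lim_seq_div_INR (K : R) : is_lim_seq (fun n => K / INR n) 0.
Proof.
  replace (Finite 0) with (Rbar_mult K (Rbar_inv p_infty)) by (simpl; f_equal; ring).
  apply is_lim_seq_scal_l, is_lim_seq_inv; [exact is_lim_seq_INR | discriminate].
Qed.

Lemma is_lim_seq_bracket_div (u : nat -> R) (l K1 K2 : R) :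
  eventually (fun n => l - K1 / INR n <= u n <= l + K2 / INR n) -> is_lim_seq u l.
Proof.
  intros Hu. apply (is_lim_seq_le_le_loc _ _ _ _ Hu).
  - replace (Finite l) with (Finite (l - 0)) by (f_equal; ring).
    apply is_lim_seq_minus'; [apply is_lim_seq_const | apply is_lim_seq_div_INR].
  - replace (Finite l) with (Finite (l + 0)) by (f_equal; ring).
    apply is_lim_seq_plus'; [apply is_lim_seq_const | apply is_lim_seq_div_INR].
Qed.

Lemma is_lim_seq_sqr_dist_div (u : nat -> R) (l K : R) :
  eventually (fun n => (u n - l) ^ 2 <= K / INR n) -> is_lim_seq u l.
Proof.
  intros Hu.
  assert (Hsq : is_lim_seq (fun n => (u n - l) ^ 2) 0).
  { apply (is_lim_seq_le_le_loc (fun _ => 0) _ (fun n => K / INR n)).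
    - destruct Hu as [N HN]. exists N. intros n Hn.
      split; [apply pow2_ge_0 | exact (HN n Hn)].
    - apply is_lim_seq_const.
    - apply is_lim_seq_div_INR. }
  apply (is_lim_seq_continuous sqrt) in Hsq; [|apply continuity_pt_sqrt; lra].
  rewrite sqrt_0 in Hsq.
  apply (is_lim_seq_ext _ (fun n => Rabs (u n - l))) in Hsq.
  2: { intros n. rewrite <- Rsqr_pow2. apply sqrt_Rsqr_abs. }
  apply is_lim_seq_abs_0 in Hsq.
  apply (is_lim_seq_plus' _ (fun _ => l) 0 l) in Hsq; [|apply is_lim_seq_const].
  rewrite Rplus_0_l in Hsq. revert Hsq.
  apply is_lim_seq_ext. intros n. ring.
Qed.

Lemma LambertW_2_spec : 0 < LambertW 2 < 1 /\ LambertW 2 * exp (LambertW 2) = 2.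
Proof.
  assert (Hex : exists w, -1 <= w /\ w * exp w = 2).
  { assert (Hc : continuity (fun w => w * exp w - 2)).
    { apply continuity_minus; [apply continuity_mult|apply continuity_const].
      - apply derivable_continuous, derivable_id.
      - apply derivable_continuous, derivable_exp.
      - intros a b; reflexivity. }
    pose proof (exp_ineq1 1 ltac:(lra)) as He.
    destruct (IVT _ 0 1 Hc) as [w [Hw1 Hw2]]; cbv beta; [lra | rewrite exp_0; lra | lra |].
    exists w. lra. }
  destruct (epsilon_spec (inhabits 0) _ Hex) as [Hm1 Hw].
  unfold LambertW. set (w := epsilon _ _) in *.
  pose proof (exp_pos w) as Hexp.
  assert (Hw0 : 0 < w) by (destruct (Rle_or_lt w 0); nra).
  assert (Hw1 : w < 1).
  { destruct (Rlt_or_le w 1) as [H|H]; [exact H|].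
    pose proof (exp_ineq1 w ltac:(lra)). nra. }
  lra.
Qed.

Lemma mu_bounds : 0 < mu < 1 / 2.
Proof. unfold mu. pose proof LambertW_2_spec. lra. Qed.

Lemma ln_mu : ln mu = - 2 * mu.
Proof.
  destruct LambertW_2_spec as [Hw Hwe].
  assert (E : mu = / exp (LambertW 2)).
  { unfold mu. pose proof (exp_pos (LambertW 2)).
    apply Rmult_eq_reg_l with (exp (LambertW 2)); [|lra].
    rewrite Rinv_r by lra. lra. }
  rewrite E, ln_Rinv, ln_exp by apply exp_pos.
  rewrite <- E. unfold mu. lra.
Qed.

Lemma sum_inv_pred_bounds (r n : nat) : (1 <= r <= n)%nat ->
  ln (INR n) - ln (INR r)
  <= sum_n_m (fun k : nat => / (INR k - 1)) (S r) n
  <= ln (INR n) - ln (INR r) + / INR r.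
Proof.
  intros Hrn. remember (n - r)%nat as d eqn:Hd.
  revert r Hrn Hd. induction d as [|d IH]; intros r Hrn Hd.
  - replace r with n by lia. rewrite sum_n_m_zero by lia.
    change (@zero R_AbelianMonoid) with 0.
    assert (0 < / INR n) by (apply Rinv_0_lt_compat, lt_0_INR; lia). lra.
  - destruct (IH (S r) ltac:(lia) ltac:(lia)) as [IH1 IH2].
    rewrite sum_Sn_m by lia. change (@plus R_AbelianMonoid) with Rplus.
    rewrite S_INR in *.
    assert (HR : 1 <= INR r) by (apply (le_INR 1); lia).
    pose proof (ln_sub_ln_le (INR r) (INR r + 1) ltac:(lra) ltac:(lra)) as L1.
    pose proof (ln_sub_ln_le (INR r + 1) (INR r) ltac:(lra) ltac:(lra)) as L2.
    replace (INR r + 1 - 1) with (INR r) by ring.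
    replace ((INR r + 1 - INR r) / INR r) with (/ INR r) in L1 by (field; lra).
    replace ((INR r - (INR r + 1)) / (INR r + 1)) with (- / (INR r + 1)) in L2
      by (field; lra).
    lra.
Qed.

Lemma EP_eq_sum_inv_pred (n r : nat) : (1 <= r <= n)%nat ->
  EP n r = INR r / INR n *
    ((1 + / INR n) * sum_n_m (fun k : nat => / (INR k - 1)) (S r) n
     + (INR n - INR r) / INR n).
Proof.
  intros Hrn. unfold EP. f_equal.
  assert (HN : 0 < INR n) by (apply lt_0_INR; lia).
  rewrite (sum_n_m_ext_loc _
             (fun k => plus (mult (1 + / INR n) (/ (INR k - 1))) (/ INR n))).
  - rewrite sum_n_m_plus, sum_n_m_mult_l, sum_n_m_const.
    replace (S n - S r)%nat with (n - r)%nat by lia.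
    rewrite minus_INR by lia. reflexivity.
  - intros k Hk. assert (1 < INR k) by (apply lt_1_INR; lia).
    change ((1 + INR k / INR n) / (INR k - 1) = (1 + / INR n) * / (INR k - 1) + / INR n).
    field. lra.
Qed.

Definition EP_profile (x : R) : R := x * (1 - x - ln x).

Lemma EP_profile_bounds (n r : nat) : (1 <= r <= n)%nat ->
  EP_profile (INR r / INR n) <= EP n r <= EP_profile (INR r / INR n) + 3 / INR n.
Proof.
  intros Hrn. rewrite EP_eq_sum_inv_pred by exact Hrn.
  destruct (sum_inv_pred_bounds r n Hrn) as [S1 S2].
  set (s := sum_n_m _ _ _) in *.
  assert (HR : 1 <= INR r) by (apply (le_INR 1); lia).
  assert (HRN : INR r <= INR n) by (apply le_INR; lia).
  set (i := / INR n).
  set (x := INR r / INR n).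
  set (L := ln (INR n) - ln (INR r)) in *.
  assert (Hi : 0 < i <= 1) by (apply inv_INR_bounds; lia).
  assert (Hx : 0 < x <= 1).
  { unfold x, Rdiv. fold i. split; [nra|].
    replace 1 with (INR n * i) by (unfold i; field; lra). nra. }
  assert (HL : L = - ln x) by (unfold L, x; rewrite ln_div by lra; ring).
  assert (HxL : x * L <= 1 - x).
  { pose proof (ln_sub_ln_le x 1 ltac:(lra) ltac:(lra)) as H.
    rewrite ln_1 in H. rewrite HL.
    replace (1 - x) with (x * ((1 - x) / x)) by (field; lra). nra. }
  assert (Hxr : x * / INR r = i) by (unfold x, i; field; lra).
  unfold EP_profile. fold x. replace (ln x) with (- L) by lra.
  replace ((INR n - INR r) / INR n) with (1 - x) by (unfold x; field; lra).
  replace (3 / INR n) with (3 * i) by (unfold i; field; lra).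
  assert (0 <= L) by (pose proof (ln_le (INR r) (INR n) ltac:(lra) HRN); unfold L; lra).
  assert (Hs : x * L <= x * s <= x * L + i).
  { split; [apply Rmult_le_compat_l; lra|].
    rewrite <- Hxr, <- Rmult_plus_distr_l. apply Rmult_le_compat_l; lra. }
  assert (i * (x * s) <= i * (x * L + i)) by (apply Rmult_le_compat_l; lra).
  assert (i * (x * L + i) <= i * 2) by (apply Rmult_le_compat_l; lra).
  assert (0 <= i * (x * s)) by (apply Rmult_le_pos; nra).
  split; nra.
Qed.

Lemma EP_profile_mu : EP_profile mu = mu * (1 + mu).
Proof. unfold EP_profile. rewrite ln_mu. ring. Qed.

Lemma EP_profile_le (x : R) : 0 < x -> EP_profile x <= EP_profile mu - (x - mu) ^ 2.
Proof.
  intros Hx. pose proof mu_bounds.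
  pose proof (ln_sub_ln_le x mu Hx ltac:(lra)) as Hln.
  assert (x * (ln mu - ln x) <= mu - x).
  { replace (mu - x) with (x * ((mu - x) / x)) by (field; lra).
    apply Rmult_le_compat_l; lra. }
  unfold EP_profile. rewrite ln_mu in *. nra.
Qed.

Lemma EP_profile_ge (x : R) : 0 < x ->
  EP_profile mu - (x - mu) ^ 2 * (1 + / mu) <= EP_profile x.
Proof.
  intros Hx. pose proof mu_bounds.
  pose proof (ln_sub_ln_le mu x ltac:(lra) Hx) as Hln.
  assert (x * (ln x - ln mu) <= x * ((x - mu) / mu)) by (apply Rmult_le_compat_l; lra).
  replace ((x - mu) ^ 2 * (1 + / mu)) with ((x - mu) ^ 2 + x * ((x - mu) / mu) - x + mu)
    by (field; lra).
  unfold EP_profile. rewrite ln_mu in *. nra.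
Qed.

Lemma EP_le_mu (n r : nat) : (1 <= r <= n)%nat ->
  EP n r <= mu * (1 + mu) - (INR r / INR n - mu) ^ 2 + 3 / INR n.
Proof.
  intros Hrn.
  assert (0 < INR r / INR n) by (apply Rdiv_lt_0_compat; apply lt_0_INR; lia).
  pose proof (EP_profile_bounds n r Hrn). pose proof (EP_profile_le (INR r / INR n)).
  rewrite EP_profile_mu in *. lra.
Qed.

Lemma EP_ge_mu (n r : nat) : (1 <= r <= n)%nat ->
  mu * (1 + mu) - (INR r / INR n - mu) ^ 2 * (1 + / mu) <= EP n r.
Proof.
  intros Hrn.
  assert (0 < INR r / INR n) by (apply Rdiv_lt_0_compat; apply lt_0_INR; lia).
  pose proof (EP_profile_bounds n r Hrn). pose proof (EP_profile_ge (INR r / INR n)).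
  rewrite EP_profile_mu in *. lra.
Qed.

Lemma floorN_spec (x : R) : 0 <= x -> INR (floorN x) <= x < INR (floorN x) + 1.
Proof.
  intros Hx. destruct (base_Int_part x) as [H1 H2].
  assert (Hp : (0 <= Int_part x)%Z).
  { assert (Hz : (-1 < Int_part x)%Z) by (apply lt_IZR; lra). lia. }
  unfold floorN. rewrite INR_IZR_INZ, Z2Nat.id by exact Hp. lra.
Qed.

Lemma floorN_mu_range (n : nat) : 1 <= mu * INR n ->
  (1 < n)%nat /\ (1 <= floorN (mu * INR n) <= n - 1)%nat /\
  (INR (floorN (mu * INR n)) / INR n - mu) ^ 2 <= / INR n.
Proof.
  intros Hmn. pose proof mu_bounds.
  assert (HN : 2 < INR n) by nra.
  destruct (floorN_spec (mu * INR n)) as [F1 F2]; [lra|].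
  set (r := floorN _) in *.
  assert (Hn : (1 < n)%nat) by (apply INR_lt; simpl; lra).
  assert (Hr1 : (0 < r)%nat) by (apply INR_lt; simpl; lra).
  assert (Hr2 : (r < n)%nat) by (apply INR_lt; nra).
  repeat split; try lia.
  assert (Hi : 0 < / INR n <= 1) by (apply inv_INR_bounds; lia).
  replace (INR r / INR n - mu) with ((INR r - mu * INR n) * / INR n) by (field; lra).
  rewrite Rpow_mult_distr.
  assert ((INR r - mu * INR n) ^ 2 <= 1) by nra.
  assert (0 <= (/ INR n) ^ 2 <= / INR n) by nra.
  nra.
Qed.

Lemma eventually_mu_mul_INR_ge_1 : eventually (fun n => 1 <= mu * INR n).
Proof.
  pose proof mu_bounds.
  destruct (INR_archimed mu 1) as [N HN]; [lra|].
  exists N. intros n Hn.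
  pose proof (le_INR _ _ Hn). nra.
Qed.

Lemma EP_floorN_mu_near (n : nat) : 1 <= mu * INR n ->
  mu * (1 + mu) - (1 + / mu) / INR n <= EP n (floorN (mu * INR n))
  <= mu * (1 + mu) + 3 / INR n.
Proof.
  intros Hmn. destruct (floorN_mu_range n Hmn) as [Hn [Hr Hsq]].
  set (r := floorN (mu * INR n)) in *.
  pose proof (EP_le_mu n r ltac:(lia)). pose proof (EP_ge_mu n r ltac:(lia)).
  pose proof (pow2_ge_0 (INR r / INR n - mu)).
  assert (0 < / mu) by (apply Rinv_0_lt_compat, mu_bounds).
  assert ((INR r / INR n - mu) ^ 2 * (1 + / mu) <= / INR n * (1 + / mu))
    by (apply Rmult_le_compat_r; lra).
  unfold Rdiv in *. lra.
Qed.

Section Maximiser.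

Variable M : nat -> nat.
Hypothesis HM : forall n : nat, (1 < n)%nat ->
  (1 <= M n <= n - 1)%nat /\
  (forall r : nat, (1 <= r <= n - 1)%nat -> EP n r <= EP n (M n)).

Lemma EP_M_near (n : nat) : 1 <= mu * INR n ->
  mu * (1 + mu) - (1 + / mu) / INR n <= EP n (M n) <= mu * (1 + mu) + 3 / INR n.
Proof.
  intros Hmn. destruct (floorN_mu_range n Hmn) as [Hn [Hr _]].
  destruct (HM n Hn) as [HMn Hmax].
  pose proof (EP_floorN_mu_near n Hmn). pose proof (Hmax _ Hr).
  pose proof (EP_le_mu n (M n) ltac:(lia)).
  pose proof (pow2_ge_0 (INR (M n) / INR n - mu)).
  lra.
Qed.

Lemma M_ratio_sqr_dist (n : nat) : 1 <= mu * INR n ->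
  (INR (M n) / INR n - mu) ^ 2 <= (4 + / mu) / INR n.
Proof.
  intros Hmn. destruct (floorN_mu_range n Hmn) as [Hn _].
  destruct (HM n Hn) as [HMn _].
  pose proof (EP_M_near n Hmn). pose proof (EP_le_mu n (M n) ltac:(lia)).
  unfold Rdiv in *. lra.
Qed.

End Maximiser.

Theorem proposition4 (M : nat -> nat)
  (HM : forall n : nat, (1 < n)%nat ->
        (1 <= M n <= n - 1)%nat /\
        (forall r : nat, (1 <= r <= n - 1)%nat -> EP n r <= EP n (M n))) :
  is_lim_seq (fun n => INR (M n) / INR n) mu /\
  is_lim_seq (fun n => EP n (M n)) (mu * (1 + mu)) /\
  is_lim_seq (fun n => EP n (floorN (mu * INR n))) (mu * (1 + mu)).
Proof.
  pose proof eventually_mu_mul_INR_ge_1 as Hev.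
  split; [|split].
  - apply (is_lim_seq_sqr_dist_div _ _ _ (filter_imp _ _ (M_ratio_sqr_dist M HM) Hev)).
  - apply (is_lim_seq_bracket_div _ _ _ _ (filter_imp _ _ (EP_M_near M HM) Hev)).
  - apply (is_lim_seq_bracket_div _ _ _ _ (filter_imp _ _ EP_floorN_mu_near Hev)).
Qed.
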